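(* Consider the noisy graph search with Bayesian weight updates described in the context, started from uniform weights $\omega_0(v)=\frac1n$, and let $v^*$ be the target. Then for every $\tau\ge1$ and every $0<\delta<\frac12$, with probability at least $1-\delta$, $$\omega_\tau(v^* )\ge\frac{1}{n}\,\Gamma^{-\sqrt{\frac{\tau}{2}\ln\delta^{-1}}}\,2^{-H(p)\tau},$$ where $\Gamma=\frac{1-p}{p}$.
   Context: $G=(V,E)$ is a connected undirected unweighted graph with $n$ vertices and unknown target $v^*$; $0<p<\frac12$. In each step a vertex $q$ is queried (chosen adaptively); the correct answer is ''yes'' if $q=v^*$ and otherwise a neighbor of $q$ on a shortest path from $q$ to $v^*$; each answer is independently erroneous (arbitrary other answer) with probability $p$. Weights $\omega_t$ are updated after each answer: a vertex $v$ is compatible with a yes-answer iff $v=q$, and with a no-answer $u$ iff either $u$ lies on a shortest $q$–$v$ path, or $q$ is heavy (i.e., $\omega_{t-1}(q)\ge\frac12\sum_{w}\omega_{t-1}(w)$) and $v\ne q$; compatible vertices are multiplied by $1-p$ and the others by $p$. $H(p)=-p\log_2p-(1-p)\log_2(1-p)$. *)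

From HB Require Import structures.
From mathcomp Require Import all_boot all_order all_algebra.
From mathcomp Require Import boolp reals exp.
Set Implicit Arguments. Unset Strict Implicit. Unset Printing Implicit Defensive.
Import Order.TTheory GRing.Theory Num.Theory.
Local Open Scope ring_scope.

(* A graph is a symmetric irreflexive relation [e] on a finite vertex type [T].
   An answer to a query is an [option T]: [None] = "yes", [Some u] = "u". *)

Definition on_shortest (T : finType) (e : rel T) (q v u : T) : Prop :=
  exists s : seq T,
    [/\ path e q s, last q s = v, u \in q :: s &
        forall s' : seq T, path e q s' -> last q s' = v -> (size s <= size s')%N].

Definition correct_answer (T : finType) (e : rel T) (vs q : T) (a : option T) : Prop :=
  if q == vs then a = None
  else exists u, a = Some u /\ e q u /\ on_shortest e q vs u.

Definition valid_answer (T : finType) (e : rel T) (q : T) (a : option T) : Prop :=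
  a = None \/ exists u, a = Some u /\ e q u.

Definition heavy (R : realType) (T : finType) (w : T -> R) (q : T) : bool :=
  w q >= 2^-1 * \sum_(x : T) w x.

Definition compatible (R : realType) (T : finType) (e : rel T)
    (w : T -> R) (q : T) (a : option T) (v : T) : bool :=
  match a with
  | None => v == q
  | Some u => `[< on_shortest e q v u >] || (heavy w q && (v != q))
  end.

Definition update (R : realType) (T : finType) (e : rel T) (p : R)
    (w : T -> R) (q : T) (a : option T) : T -> R :=
  fun v => w v * (if compatible e w q a v then 1 - p else p).

Definition state (R : realType) (T : finType) :=
  (seq (T * option T) * seq bool * (T -> R))%type.

(* One step of the process driven by error bit [b]:
   the (deterministic, adaptive) strategy [strat] picks the query from the
   query/answer history; the oracle [oracle] produces the answer from the past
   error bits, the query and the current error bit [b] (b = true: erroneous). *)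
Definition step (R : realType) (T : finType) (e : rel T) (p : R)
    (strat : seq (T * option T) -> T)
    (oracle : seq bool -> T -> bool -> option T)
    (st : state R T) (b : bool) : state R T :=
  let: (hist, bs, w) := st in
  let q := strat hist in
  let a := oracle bs q b in
  (rcons hist (q, a), rcons bs b, update e p w q a).

Definition weights_after (R : realType) (T : finType) (e : rel T) (p : R)
    (strat : seq (T * option T) -> T)
    (oracle : seq bool -> T -> bool -> option T) (bs : seq bool) : T -> R :=
  (foldl (step e p strat oracle) ([::], [::], fun _ => (#|T|%:R)^-1) bs).2.

Definition bits_prob (R : realType) (p : R) (bs : seq bool) : R :=
  \prod_(b <- bs) (if b then p else 1 - p).

Definition log2 (R : realType) (x : R) : R := ln x / ln 2.
Definition Hbin (R : realType) (p : R) : R :=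
  - p * log2 p - (1 - p) * log2 (1 - p).

From HB Require Import structures.
From mathcomp Require Import all_boot all_order all_algebra.
From mathcomp Require Import boolp reals sequences exp.
From mathcomp Require Import ring lra.
From mathcomp Require Import topology normedtype derive realfun.
Set Implicit Arguments. Unset Strict Implicit. Unset Printing Implicit Defensive.
Import Order.TTheory GRing.Theory Num.Theory numFieldNormedType.Exports.
Local Open Scope ring_scope.

(* The target is compatible with every correct answer, and an erroneous answer
   still multiplies its weight by p or 1 - p >= p; so after the error pattern bs
   its weight is at least (1/n) P(bs) = (1/n) p^k (1-p)^(tau-k), where k is the
   number of errors.  This equals (1/n) 2^(-H(p) tau) Gamma^(p tau - k), which
   is at least the claimed bound whenever k <= p tau + s, with
   s = sqrt(tau/2 ln(1/delta)).  By Hoeffding's inequality for the binomial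
   distribution, k > p tau + s has probability at most exp(-2 s^2/tau) = delta.
   Neither the graph structure nor the form of the erroneous answers matters. *)

Section BernoulliMGF.
Variable R : realType.

Lemma ge0_is_derive_le (f df : R -> R) (a b : R) : a <= b ->
  (forall x, is_derive x (1 : R) f (df x)) ->
  (forall x, a <= x <= b -> 0 <= df x) -> f a <= f b.
Proof.
move=> ab f_df df_ge0.
have [|c cab fba] := MVT_segment ab (fun x _ => f_df x).
  apply/continuous_subspaceT => x.
  by apply/differentiable_continuous/derivable1_diffP; case: (f_df x).
by rewrite -subr_ge0 fba mulr_ge0 ?subr_ge0 ?df_ge0; rewrite in_itv in cab.
Qed.

Variable p : R.
Hypotheses (p_ge0 : 0 <= p) (p_le1 : p <= 1).

Let mgf (x : R) := 1 - p + p * expR x.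

Let mgf_gt0 x : 0 < mgf x.
Proof.
rewrite /mgf; have ex_gt0 := expR_gt0 x.
have [ex_ge1|ex_lt1] := leP 1 (expR x).
  have : 0 <= p * (expR x - 1) by rewrite mulr_ge0 ?subr_ge0.
  lra.
have : 0 <= (1 - p) * (1 - expR x) by rewrite mulr_ge0 ?subr_ge0 // ltW.
lra.
Qed.

Let mgf_derive x : is_derive x (1 : R) mgf (p * expR x).
Proof. by apply: is_derive_eq; rewrite add0r mul1r. Qed.

Let gap x := p * x + x ^+ 2 / 8 - ln (mgf x).
Let gap' x := p + x / 4 - p * expR x / mgf x.
Let gap'' x := 4^-1 - p * (1 - p) * expR x / mgf x ^+ 2.

Let gap'_derive x : is_derive x (1 : R) gap' (gap'' x).
Proof.
have lin : is_derive x (1 : R) (fun y => p + y / 4) 4^-1.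
  by apply: is_derive_eq; rewrite add0r mul1r scaler0 add0r [_%:A]mulr1.
have pexp : is_derive x (1 : R) (fun y => p * expR y) (p * expR x).
  exact: is_derive_eq.
have inv : is_derive x (1 : R) (fun y => (mgf y)^-1) (- (mgf x)^-2 *: (p * expR x)).
  by apply: is_deriveV; [rewrite gt_eqF | exact: mgf_derive].
apply: is_derive_eq (is_deriveB lin (is_deriveM pexp inv)) _.
have mgf_neq0 : mgf x != 0 by rewrite gt_eqF.
rewrite /gap'' (_ : 1 - p = mgf x - p * expR x); last by rewrite /mgf; ring.
by rewrite -![_ *: _]/(_ * _); field.
Qed.

Let gap_derive x : is_derive x (1 : R) gap (gap' x).
Proof.
have poly : is_derive x (1 : R) (fun y => p * y + y ^+ 2 / 8) (p + x / 4).
  by apply: is_derive_eq; rewrite !scaler0 !add0r -![_ *: _]/(_ * _); field.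
have lnmgf : is_derive x (1 : R) (@ln R \o mgf) ((mgf x)^-1 * (p * expR x)).
  exact: is_derive1_comp (is_derive1_ln (mgf_gt0 x)) (mgf_derive x).
apply: is_derive_eq (is_deriveB poly lnmgf) _.
by rewrite /gap' [_^-1 * _]mulrC.
Qed.

(* AM-GM: [4 (1 - p) (p e^x) <= ((1 - p) + p e^x)^2]; this is where the
   constant [1/8] comes from. *)
Let gap''_ge0 x : 0 <= gap'' x.
Proof.
rewrite /gap'' subr_ge0 ler_pdivrMr ?exprn_gt0 //.
have := sqr_ge0 (1 - p - p * expR x); rewrite /mgf; nra.
Qed.

Let gap_ge0 x : 0 <= x -> 0 <= gap x.
Proof.
move=> x_ge0.
have gap'_ge0 y : 0 <= y -> 0 <= gap' y.
  move=> y_ge0; have <- : gap' 0 = 0.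
    by rewrite /gap' /mgf expR0 mulr1 subrK divr1 mul0r addr0 subrr.
  by apply: ge0_is_derive_le y_ge0 gap'_derive _ => z _; apply: gap''_ge0.
have <- : gap 0 = 0.
  by rewrite /gap /mgf expR0 mulr1 subrK ln1 mulr0 expr0n /= mul0r addr0 subrr.
by apply: ge0_is_derive_le x_ge0 gap_derive _ => y /andP[y_ge0 _]; apply: gap'_ge0.
Qed.

Lemma bernoulli_mgf_le x :
  0 <= x -> 1 - p + p * expR x <= expR (p * x + x ^+ 2 / 8).
Proof.
move=> /gap_ge0; rewrite subr_ge0 => ln_le.
by rewrite -[leLHS]/(mgf x) -(lnK (mgf_gt0 x)) ler_expR.
Qed.

End BernoulliMGF.

Lemma sum_tuple_prod (R : comPzSemiRingType) (X : finType) n (F : X -> R) :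
  \sum_(t : n.-tuple X) \prod_(x <- t) F x = (\sum_x F x) ^+ n.
Proof.
elim: n => [|n IHn].
  rewrite (eq_bigr (fun _ => 1)) => [|t _]; last by rewrite tuple0 big_nil.
  by rewrite sumr_const card_tuple expn0 expr0.
rewrite (reindex (fun xt : X * n.-tuple X => [tuple of xt.1 :: xt.2])) /=; last first.
  exists (fun t => (thead t, [tuple of behead t])).
    by move=> [x t] _; rewrite theadE; congr pair; apply: val_inj.
  by move=> t _; rewrite -tuple_eta.
rewrite -(pair_bigA _ (fun x (t : n.-tuple X) => \prod_(y <- x :: t) F y)) /=.
under eq_bigr => x _ do under eq_bigr => t _ do rewrite big_cons.
under eq_bigr => x _ do rewrite -big_distrr /= IHn.
by rewrite -mulr_suml exprS.
Qed.

Lemma ler_sum_nneg_subset (R : numDomainType) I (s : seq I) (P Q : {pred I})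
    (f : I -> R) :
  {subset Q <= P} -> {in [predD P & Q], forall i, 0 <= f i} ->
  \sum_(i <- s | Q i) f i <= \sum_(i <- s | P i) f i.
Proof.
move=> QP PQf; rewrite big_mkcond [leRHS]big_mkcond ler_sum // => i _.
by move/implyP: (QP i); move: (PQf i); rewrite !inE -!topredE /=; do !case: ifP.
Qed.

Lemma prod_count (R : comPzSemiRingType) (a b : R) (s : seq bool) :
  \prod_(x <- s) (if x then a else b) = a ^+ count id s * b ^+ count negb s.
Proof.
elim: s => [|x s IHs]; first by rewrite big_nil !expr0 mulr1.
by rewrite big_cons IHs; case: x; rewrite /= ?add0n ?add1n exprS; ring.
Qed.

Section BitsProb.
Variables (R : realType) (p : R).

Lemma bits_probE bs : bits_prob p bs = p ^+ count id bs * (1 - p) ^+ count negb bs.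
Proof. exact: prod_count. Qed.

Lemma sum_bits_prob n : \sum_(bs : n.-tuple bool) bits_prob p bs = 1.
Proof. by rewrite sum_tuple_prod big_bool /= subrKC expr1n. Qed.

Hypotheses (p_ge0 : 0 <= p) (p_le1 : p <= 1).

Lemma bits_prob_ge0 bs : 0 <= bits_prob p bs.
Proof. by apply: prodr_ge0 => -[] _; rewrite ?subr_ge0. Qed.

Lemma chernoff_count n (a lam : R) : 0 <= lam ->
  \sum_(bs : n.-tuple bool | a < (count id bs)%:R) bits_prob p bs
    <= expR (- (lam * a)) * (1 - p + p * expR lam) ^+ n.
Proof.
move=> lam_ge0.
have markov : \sum_(bs : n.-tuple bool | a < (count id bs)%:R) bits_prob p bs <=
    \sum_(bs : n.-tuple bool) bits_prob p bs * expR (lam * ((count id bs)%:R - a)).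
  rewrite big_mkcond /=; apply: ler_sum => bs _; case: ifP => [a_lt|_].
    rewrite ler_peMr ?bits_prob_ge0 // -[leLHS]expR0 ler_expR.
    by rewrite mulr_ge0 // subr_ge0 ltW.
  by rewrite mulr_ge0 ?bits_prob_ge0 ?expR_ge0.
apply: (le_trans markov).
have tilt bs : bits_prob p bs * expR (lam * ((count id bs)%:R - a)) =
    expR (- (lam * a)) * \prod_(b <- bs) (if b then p * expR lam else 1 - p).
  rewrite bits_probE prod_count mulrBr expRD [lam * _%:R]mulrC expRM_natl exprMn; ring.
under eq_bigr do rewrite tilt.
by rewrite -big_distrr sum_tuple_prod big_bool /= [_ + (1 - p)]addrC.
Qed.

Lemma hoeffding_count n (s : R) : (0 < n)%N -> 0 <= s ->
  \sum_(bs : n.-tuple bool | p * n%:R + s < (count id bs)%:R) bits_prob p bs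
    <= expR (- (2 * s ^+ 2 / n%:R)).
Proof.
move=> n_gt0 s_ge0; have n_neq0 : n%:R != 0 :> R by rewrite pnatr_eq0 -lt0n.
pose lam := 4 * s / n%:R.
have lam_ge0 : 0 <= lam by rewrite divr_ge0 ?mulr_ge0.
apply: le_trans (chernoff_count n _ lam_ge0) _.
have mgf_le := bernoulli_mgf_le p_ge0 p_le1 lam_ge0.
apply: le_trans (ler_wpM2l (expR_ge0 _) (lerXn2r n _ _ mgf_le)) _.
- by rewrite nnegrE addr_ge0 ?subr_ge0 ?mulr_ge0 ?expR_ge0.
- by rewrite nnegrE expR_ge0.
(* [lam = 4 s / n] minimises the exponent. *)
have exponentE : - (lam * (p * n%:R + s)) + n%:R * (p * lam + lam ^+ 2 / 8) =
    - (2 * s ^+ 2 / n%:R) by rewrite /lam; field.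
by rewrite -expRM_natl -expRD exponentE.
Qed.

End BitsProb.

Lemma expR_hoeffding_radius (R : realType) (t delta : R) :
  0 < t -> 0 < delta <= 1 ->
  expR (- (2 * Num.sqrt (t / 2 * ln delta^-1) ^+ 2 / t)) = delta.
Proof.
move=> t_gt0 /andP[delta_gt0 delta_le1].
have lninv_ge0 : 0 <= ln delta^-1 by rewrite ln_ge0 // invf_ge1.
rewrite sqr_sqrtr; last by rewrite mulr_ge0 // divr_ge0 // ltW.
rewrite (_ : 2 * _ / _ = ln delta^-1); last by field; rewrite gt_eqF.
by rewrite expRN lnK ?invrK // posrE invr_gt0.
Qed.

Section Entropy.
Variables (R : realType) (p : R).
Hypotheses (p_gt0 : 0 < p) (p_lt1 : p < 1).

Lemma bits_prob_entropyE bs : bits_prob p bs =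
  2 `^ (- (Hbin p * (size bs)%:R)) *
  ((1 - p) / p) `^ (p * (size bs)%:R - (count id bs)%:R).
Proof.
have q_gt0 : 0 < 1 - p by rewrite subr_gt0.
have ln2_neq0 : ln (2 : R) != 0 by rewrite gt_eqF // ln_gt0 // ltr1n.
have expr_ln (a : R) n : 0 < a -> a ^+ n = expR (n%:R * ln a).
  by move=> a_gt0; rewrite expRM_natl lnK.
have size_count : (size bs)%:R = (count id bs)%:R + (count negb bs)%:R :> R.
  by rewrite -natrD; have := count_predC id bs => /= ->.
rewrite bits_probE !expr_ln // /powR pnatr_eq0 (gt_eqF (divr_gt0 q_gt0 p_gt0)).
rewrite -!expRD; congr expR.
by rewrite lnM ?lnV ?posrE ?invr_gt0 // /Hbin /log2 size_count; field.
Qed.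

Lemma bits_prob_ge_typical bs (s : R) : p <= 1 - p ->
    (count id bs)%:R <= p * (size bs)%:R + s ->
  ((1 - p) / p) `^ (- s) * 2 `^ (- (Hbin p * (size bs)%:R)) <= bits_prob p bs.
Proof.
move=> p_le_compl count_le.
rewrite bits_prob_entropyE mulrC ler_wpM2l ?powR_ge0 //.
apply: ler_powR; last by lra.
by rewrite ler_pdivlMr // mul1r; lra.
Qed.

End Entropy.

Section TargetWeight.
Variables (R : realType) (T : finType) (e : rel T) (p : R) (vs : T).
Variables (strat : seq (T * option T) -> T)
  (oracle : seq bool -> T -> bool -> option T).
Hypothesis oracle_correct : forall bs q, correct_answer e vs q (oracle bs q false).

Lemma compatible_correct_answer bs (w : T -> R) q :
  compatible e w q (oracle bs q false) vs.
Proof.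
have := oracle_correct bs q; rewrite /correct_answer /compatible.
case: eqP => [-> -> | _ [u [-> [_ on_path]]]]; first exact: eqxx.
by apply/orP; left; apply/asboolP.
Qed.

Hypotheses (p_ge0 : 0 <= p) (p_le_compl : p <= 1 - p).

Lemma step_target_ge (st : state R T) b : 0 <= st.2 vs ->
  st.2 vs * (if b then p else 1 - p) <= (step e p strat oracle st b).2 vs.
Proof.
case: st => [[hist bs] w] /= w_ge0; rewrite /update ler_wpM2l //.
case: b; last by rewrite compatible_correct_answer.
by case: ifP.
Qed.

Lemma foldl_step_target_ge (st : state R T) bs : 0 <= st.2 vs ->
  st.2 vs * bits_prob p bs <= (foldl (step e p strat oracle) st bs).2 vs.
Proof.
elim: bs st => [|b bs IHbs] st w_ge0 /=; first by rewrite /bits_prob big_nil mulr1.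
have factor_ge0 : 0 <= (if b then p else 1 - p).
  by case: b => //; rewrite (le_trans p_ge0 p_le_compl).
have step_ge0 : 0 <= (step e p strat oracle st b).2 vs.
  exact: le_trans (mulr_ge0 w_ge0 factor_ge0) (step_target_ge b w_ge0).
apply: le_trans (IHbs _ step_ge0).
rewrite /bits_prob big_cons mulrA ler_wpM2r ?step_target_ge //.
by apply: bits_prob_ge0 => //; apply: le_trans p_le_compl _; rewrite lerBlDr lerDl.
Qed.

Lemma weights_after_target_ge bs :
  (#|T|%:R)^-1 * bits_prob p bs <= weights_after e p strat oracle bs vs.
Proof.
by apply: (foldl_step_target_ge (st := ([::], [::], fun=> _))); rewrite /= invr_ge0.
Qed.

End TargetWeight.

Theorem lemma6 (R : realType) (T : finType) (e : rel T)
    (e_sym : symmetric e) (e_irr : irreflexive e)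
    (e_conn : forall x y : T, connect e x y)
    (p : R) (hp0 : 0 < p) (hp1 : p < 2^-1)
    (vs : T)
    (strat : seq (T * option T) -> T)
    (oracle : seq bool -> T -> bool -> option T)
    (oracle_correct : forall bs q, correct_answer e vs q (oracle bs q false))
    (oracle_error : forall bs q, valid_answer e q (oracle bs q true) /\
                                 oracle bs q true <> oracle bs q false)
    (tau : nat) (htau : (1 <= tau)%N)
    (delta : R) (hd0 : 0 < delta) (hd1 : delta < 2^-1) :
  let Gamma := (1 - p) / p in
  \sum_(bs : tau.-tuple bool |
          weights_after e p strat oracle bs vs >=
          (#|T|%:R)^-1
          * Gamma `^ (- Num.sqrt (tau%:R / 2 * ln (delta^-1)))
          * 2 `^ (- (Hbin p * tau%:R)))
     bits_prob p bs
  >= 1 - delta.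
Proof.
cbv zeta; set Gamma := (1 - p) / p; set s := Num.sqrt _.
have p_lt1 : p < 1 by apply: lt_trans hp1 _; rewrite invf_lt1 // ltr1n.
have p_le_compl : p <= 1 - p by move: hp1; rewrite -[2^-1]div1r ltr_pdivlMr //; lra.
pose typical (bs : tau.-tuple bool) := (count id bs)%:R <= p * tau%:R + s.
have atypical_le : \sum_(bs : tau.-tuple bool | ~~ typical bs) bits_prob p bs <= delta.
  under eq_bigl => bs do rewrite /typical -ltNge.
  apply: le_trans (hoeffding_count (ltW hp0) (ltW p_lt1) htau (sqrtr_ge0 _)) _.
  rewrite expR_hoeffding_radius ?ltr0n ?hd0 //.
  by rewrite ltW // (lt_trans hd1) // invf_lt1 // ltr1n.
have typical_weight bs : typical bs ->
    (#|T|%:R)^-1 * Gamma `^ (- s) * 2 `^ (- (Hbin p * tau%:R))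
      <= weights_after e p strat oracle bs vs.
  move=> typ; apply: le_trans (weights_after_target_ge strat oracle_correct
    (ltW hp0) p_le_compl bs).
  rewrite -mulrA ler_wpM2l ?invr_ge0 //.
  have := bits_prob_ge_typical (bs := bs) (s := s) hp0 p_lt1 p_le_compl.
  by rewrite size_tuple; apply.
apply: le_trans (ler_sum_nneg_subset (Q := typical) _ _ _).
- by rewrite -(sum_bits_prob p tau) (bigID typical) /= -addrA gerDl subr_le0.
- exact: typical_weight.
- by move=> bs _; apply: bits_prob_ge0; rewrite ltW.
Qed.
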